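(* Under the hypotheses in the context, the cohomology spaces of the differential algebra $(\mathcal A(\mathbf{CPE}),\{D_t,D_1,\dots,D_m\})$ are $$H^q_{\mathrm E}(\mathbf{CPE})\cong\begin{cases}0,& q<0,\ 1\le q\le m-2,\ q>m+1;\\ \mathbb R,& q=0;\\ \ker D_t^{m-1},& q=m-1;\\ H^m_{\mathrm H}(\mathbf{CPE})/\operatorname{im}D_t^m,& q=m+1,\end{cases}$$ and in degree $q=m$, $H^m_{\mathrm E}(\mathbf{CPE})/\operatorname{im}\big(H^{m-1}_{\mathrm H}(\mathbf{CPE})\big)\cong\ker D_t^m$, where the map $H^{m-1}_{\mathrm H}(\mathbf{CPE})\to H^m_{\mathrm E}(\mathbf{CPE})$ is induced by $\omega\mapsto(-1)^{m-1}dt\wedge\omega$.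
   Context: Fix an integer $m\ge 2$, $M=\{1,\dots,m\}$, $N=\{2,\dots,m\}$; indices $\lambda,\mu$ in $M$, $\alpha,\beta$ in $N$; repeated upper/lower indices are summed. $\mathbb I=\mathbb Z_+^m$ is the set of multi-indices $\mathrm i$; $\mathrm i+(\mu)$ increases the $\mu$-th entry by $1$, $(\mu)=0+(\mu)$, $2(\mu)=(\mu)+(\mu)$; $\mathbb I_0=\{\mathrm i:i^1=0\}$, $\mathbb I_1=\{\mathrm i:i^1\in\{0,1\}\}$. $\mathcal A(\mathbf{CPE})$ is the algebra of smooth real functions of finitely many of the variables $t\in\mathbb R$, $x^\mu$, $u^1_{\mathrm i}$ ($\mathrm i\in\mathbb I_0$), $u^\alpha_{\mathrm i}$ ($\mathrm i\in\mathbb I$), $p_{\mathrm i}$ ($\mathrm i\in\mathbb I_1$). It carries commuting derivations $D_\mu=\partial_{x^\mu}+u^1_{\mathrm i_0+(\mu)}\partial_{u^1_{\mathrm i_0}}+u^\alpha_{\mathrm i+(\mu)}\partial_{u^\alpha_{\mathrm i}}+p_{\mathrm i_1+(\mu)}\partial_{p_{\mathrm i_1}}$ (sums over $\mathrm i_0\in\mathbb I_0$, $\mathrm i\in\mathbb I$, $\mathrm i_1\in\mathbb I_1$), where the variables not in the list are expressed recursively by $u^1_{\mathrm k}=-u^\beta_{\mathrm k-(1)+(\beta)}$ ($k^1\ge1$) and $p_{\mathrm k}=-D_{\mathrm k-2(1)}\Phi$ ($k^1\ge2$), $\Phi=\sum_\alpha p_{2(\alpha)}+u^\lambda_{(\mu)}u^\mu_{(\lambda)}$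 with $u^1_{(1)}$ replaced by $-u^\alpha_{(\alpha)}$ (this is the quotient of the algebra of finite-order functions of $t,x^\mu,u^\mu_{\mathrm i},p_{\mathrm i}$ by the differential ideal generated by $u^\mu_{(\mu)}$ and $\Delta p+u^\lambda_{(\mu)}u^\mu_{(\lambda)}$, $\Delta=\sum_\mu D_\mu^2$). $D_{\mathrm i}=D_1^{i^1}\cdots D_m^{i^m}$. Let $\mathrm E=(E^1,\dots,E^m,E)\in\mathcal A(\mathbf{CPE})^{m+1}$ satisfy $D_\mu E^\mu=0$ and $\Delta E+2u^\lambda_{(\mu)}D_\lambda E^\mu=0$ (with $u^1_{(1)}=-u^\alpha_{(\alpha)}$), let $\mathrm{ev}_{\mathrm E}=D_{\mathrm i_0}E^1\,\partial_{u^1_{\mathrm i_0}}+D_{\mathrm i}E^\alpha\,\partial_{u^\alpha_{\mathrm i}}+D_{\mathrm i_1}E\,\partial_{p_{\mathrm i_1}}$, assumed to commute with all $D_\mu$, and let $D_t=\partial_t+\mathrm{ev}_{\mathrm E}$, so $[D_t,D_\mu]=0$. Horizontal forms $\Omega^q_{\mathrm H}$: $q$-forms in $dx^\mu$ with skew-symmetric coefficients in $\mathcal A(\mathbf{CPE})$ ($0\le q\le m$, zero otherwise), $d_{\mathrm H}=dx^\mu\wedge D_\mu$ (acting on coefficients), $H^q_{\mathrm H}(\mathbf{CPE})=\ker d_{\mathrm H}/\operatorname{im}d_{\mathrm H}$. Evolution forms: $\Omega^q_{\mathrm E}=dt\wedge\Omega^{q-1}_{\mathrm H}\oplus\Omega^q_{\mathrm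 H}$ with $d_{\mathrm E}(dt\wedge\omega^{q-1}+\omega^q)=dt\wedge(D_t\omega^q-d_{\mathrm H}\omega^{q-1})+d_{\mathrm H}\omega^q$ ($D_t$ acting coefficientwise), and $H^q_{\mathrm E}(\mathbf{CPE})=\ker d_{\mathrm E}/\operatorname{im}d_{\mathrm E}$ in degree $q$. $D_t$ acting coefficientwise commutes with $d_{\mathrm H}$ and induces $D^q_t:H^q_{\mathrm H}(\mathbf{CPE})\to H^q_{\mathrm H}(\mathbf{CPE})$. Standing fact used in the statement: $H^q_{\mathrm H}(\mathbf{CPE})=0$ for $1\le q\le m-2$, and $H^0_{\mathrm H}(\mathbf{CPE})$ consists of the smooth functions of $t$ alone. *)

From Stdlib Require Import Reals ZArith List.
From Coquelicot Require Import Coquelicot.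
From mathcomp Require Import ssreflect ssrfun ssrbool eqtype ssrnat seq choice
  fintype finfun bigop finset.

Set Implicit Arguments.
Unset Strict Implicit.
Unset Printing Implicit Defensive.

Local Open Scope R_scope.

Section CPE.
(* The dimension is m = n.+2 (so m >= 2).  Index mu : 'I_m; the paper's index 1
   is ord0, the paper's N = {2..m} is {a | a != ord0}. *)
Context (n : nat).
Local Notation m := n.+2.

Definition mi := {ffun 'I_m -> nat}.
Definition mi0 : mi := [ffun _ => 0%N].
Definition addu (i : mi) (mu : 'I_m) : mi := [ffun k => (i k + (k == mu))%N].
Definition subu (i : mi) (mu : 'I_m) : mi := [ffun k => (i k - (k == mu))%N].
Definition e1 (mu : 'I_m) : mi := addu mi0 mu.
Definition e2 (mu : 'I_m) : mi := addu (e1 mu) mu.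

(* jet variables: t, x^mu, u^mu_i, p_i *)
Inductive var : Type :=
| Vt : var
| Vx : 'I_m -> var
| Vu : 'I_m -> mi -> var
| Vp : mi -> var.

Definition var_eqb (v w : var) : bool :=
  match v, w with
  | Vt, Vt => true
  | Vx a, Vx b => a == b
  | Vu a i, Vu b j => (a == b) && (i == j)
  | Vp i, Vp j => i == j
  | _, _ => false
  end.

(* the variables of A(CPE): u^1_i (i in I_0), u^alpha_i (i in I), p_i (i in I_1) *)
Definition allowed (v : var) : bool :=
  match v with
  | Vt => true
  | Vx _ => true
  | Vu mu i => (mu != ord0) || (i ord0 == 0%N)
  | Vp i => (i ord0 <= 1)%N
  end.

Definition Point := var -> R.
Definition fn := Point -> R.

Definition dep_on (S : list var) (f : fn) : Prop :=
  forall p q : Point, (forall v, In v S -> p v = q v) -> f p = f q.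

Definition upd (p : Point) (v : var) (s : R) : Point :=
  fun w => if var_eqb w v then s else p w.
Definition pd (v : var) (f : fn) : fn :=
  fun p => Derive (fun s => f (upd p v s)) (p v).
Definition exd (v : var) (f : fn) : Prop :=
  forall p, ex_derive (fun s => f (upd p v s)) (p v).
Definition iter_pd (vs : list var) (f : fn) : fn := List.fold_right pd f vs.

Definition cont_on (S : list var) (g : fn) : Prop :=
  forall (p : Point) (eps : R), 0 < eps -> exists del : R, 0 < del /\
    forall q : Point, (forall v, In v S -> Rabs (q v - p v) < del) ->
      Rabs (g q - g p) < eps.

Definition smooth_on (S : list var) (f : fn) : Prop :=
  (forall vs v, exd v (iter_pd vs f)) /\ (forall vs, cont_on S (iter_pd vs f)).

Definition inA (f : fn) : Prop :=
  exists S : list var, List.Forall (fun v => allowed v = true) S /\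
    dep_on S f /\ smooth_on S f.

(* the derivation  sum_v w(v) d/dv  (w evaluated at the point), computed as the
   derivative along the straight line through p in direction w p *)
Definition Dder (w : Point -> Point) (f : fn) : fn :=
  fun p => Derive (fun s => f (fun v => p v + s * w p v)) 0.

Definition sumN (F : 'I_m -> R) : R := \big[Rplus/0]_(a < m | a != ord0) F a.
Definition sumM (F : 'I_m -> R) : R := \big[Rplus/0]_(a < m) F a.

Definition wN (a : 'I_m) (p : Point) (v : var) : R :=
  match v with
  | Vt => 0
  | Vx nu => if nu == a then 1 else 0
  | Vu mu i => p (Vu mu (addu i a))
  | Vp i => p (Vp (addu i a))
  end.
Definition Dalpha (a : 'I_m) : fn -> fn := Dder (wN a).

(* D_i for i in I_0 (only D_alpha, alpha in N) *)
Definition DN (i : mi) (f : fn) : fn :=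
  foldr (fun a g => if a == ord0 then g else iter (i a) (Dalpha a) g) f (enum 'I_m).

Definition U (l mu : 'I_m) (p : Point) : R :=
  if (l == ord0) && (mu == ord0) then - sumN (fun a => p (Vu a (e1 a)))
  else p (Vu l (e1 mu)).

Definition Phi : fn := fun p =>
  sumN (fun a => p (Vp (e2 a))) + sumM (fun l => sumM (fun mu => U l mu p * U mu l p)).

Definition w1 (p : Point) (v : var) : R :=
  match v with
  | Vt => 0
  | Vx nu => if nu == ord0 then 1 else 0
  | Vu mu i =>
      if mu == ord0 then - sumN (fun b => p (Vu b (addu i b)))
      else p (Vu mu (addu i ord0))
  | Vp i =>
      if i ord0 == 0%N then p (Vp (addu i ord0))
      else - DN (subu i ord0) Phi p
  end.
Definition D1 : fn -> fn := Dder w1.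

Definition Dtot (mu : 'I_m) : fn -> fn := if mu == ord0 then D1 else Dalpha mu.

Definition Dmi (i : mi) (f : fn) : fn :=
  foldr (fun a g => iter (i a) (Dtot a) g) f (enum 'I_m).

(* E = (E^1,...,E^m, E) given as Ec : 'I_m -> fn and E0 : fn *)
Definition wev (Ec : 'I_m -> fn) (E0 : fn) (p : Point) (v : var) : R :=
  match v with
  | Vt => 0
  | Vx _ => 0
  | Vu mu i => Dmi i (Ec mu) p
  | Vp i => Dmi i E0 p
  end.
Definition ev (Ec : 'I_m -> fn) (E0 : fn) : fn -> fn := Dder (wev Ec E0).

Definition wt (Ec : 'I_m -> fn) (E0 : fn) (p : Point) (v : var) : R :=
  match v with
  | Vt => 1
  | _ => wev Ec E0 p v
  end.
Definition Dt (Ec : 'I_m -> fn) (E0 : fn) : fn -> fn := Dder (wt Ec E0).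

Definition E_admissible (Ec : 'I_m -> fn) (E0 : fn) : Prop :=
  (forall mu, inA (Ec mu)) /\ inA E0 /\
  (forall p, sumM (fun mu => Dtot mu (Ec mu) p) = 0) /\
  (forall p, sumM (fun mu => Dtot mu (Dtot mu E0) p)
             + 2 * sumM (fun l => sumM (fun mu => U l mu p * Dtot l (Ec mu) p)) = 0) /\
  (forall (mu : 'I_m) (f : fn), inA f ->
      forall p, ev Ec E0 (Dtot mu f) p = Dtot mu (ev Ec E0 f) p).

(* horizontal forms: omega S = coefficient of dx^S (S sorted increasingly) *)
Definition hform := {set 'I_m} -> fn.
Definition hzero : hform := fun _ _ => 0.
Definition hadd (a b : hform) : hform := fun S p => a S p + b S p.
Definition hscale (c : R) (a : hform) : hform := fun S p => c * a S p.

Definition isH (q : Z) (om : hform) : Prop :=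
  forall S : {set 'I_m},
    (Z.of_nat #|S| <> q -> forall p, om S p = 0) /\ inA (om S).

Definition dH (om : hform) : hform := fun T p =>
  \big[Rplus/0]_(mu in T)
     ((-1) ^ #|[set nu in T | (nu < mu)%N]| * Dtot mu (om (T :\ mu)) p).

Definition hDt (Ec : 'I_m -> fn) (E0 : fn) (om : hform) : hform :=
  fun S => Dt Ec E0 (om S).

Definition ZH (q : Z) (om : hform) : Prop := isH q om /\ dH om = hzero.
Definition BH (q : Z) (om : hform) : Prop :=
  exists eta, isH (q - 1) eta /\ dH eta = om.

(* evolution forms: (a, b) stands for dt /\ a + b *)
Definition eform := (hform * hform)%type.
Definition ezero : eform := (hzero, hzero).
Definition eadd (x y : eform) : eform := (hadd x.1 y.1, hadd x.2 y.2).
Definition escale (c : R) (x : eform) : eform := (hscale c x.1, hscale c x.2).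

Definition isE (q : Z) (x : eform) : Prop := isH (q - 1) x.1 /\ isH q x.2.

Definition dE (Ec : 'I_m -> fn) (E0 : fn) (x : eform) : eform :=
  (fun S p => Dt Ec E0 (x.2 S) p - dH x.1 S p, dH x.2).

Definition ZE Ec E0 (q : Z) (x : eform) : Prop := isE q x /\ dE Ec E0 x = ezero.
Definition BE Ec E0 (q : Z) (x : eform) : Prop :=
  exists y, isE (q - 1) y /\ dE Ec E0 y = x.

End CPE.

(* Z/B ~= Z'/B' as real vector spaces (Z, B, Z', B' subspaces, B <= Z, B' <= Z'):
   a linear map f on Z with f(Z) <= Z', f(B) <= B', inducing a bijection. *)
Definition quot_iso {V W : Type}
  (addV : V -> V -> V) (scV : R -> V -> V) (addW : W -> W -> W) (scW : R -> W -> W)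
  (Z B : V -> Prop) (Z' B' : W -> Prop) : Prop :=
  exists f : V -> W,
    (forall x y, Z x -> Z y -> f (addV x y) = addW (f x) (f y)) /\
    (forall c x, Z x -> f (scV c x) = scW c (f x)) /\
    (forall x, Z x -> Z' (f x)) /\
    (forall x, B x -> B' (f x)) /\
    (forall y, Z' y -> exists x, Z x /\ B' (addW y (scW (-1) (f x)))) /\
    (forall x, Z x -> B' (f x) -> B x).

(* A [q]-form [dt /\ a + b] is [d_E]-closed iff [d_H b = 0] and [D_t b = d_H a].
   If [b = d_H eta], the defect [c = D_t eta - a] is a [d_H]-closed [(q-1)]-form.
   Writing [c = d_H zeta + D_t g] with [d_H g = 0] -- possible because [H^(q-1)_H]
   vanishes in positive degree, while in degree 0 [c] depends on [t] alone and can
   be integrated in [t] -- exhibits the form as [d_E (dt /\ zeta + eta - g)].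
   Hence [H^q_E] vanishes wherever [H^q_H] does; in degrees [m-1] and [m] the class
   of [dt /\ a + b] is determined by [b], a [d_H]-class killed by [D_t]; in degree
   [m+1], where [b = 0], it is [a] modulo [d_H] and [D_t]; and in degree 0 a closed
   function depends on [t] alone with [d/dt] of it zero, so it is a constant.
   The analytic input is that [D_t] commutes with the total derivatives, which
   rests on the chain rule for derivations of smooth functions of finitely many
   jet variables and on Schwarz's theorem. *)

From HB Require Import structures.
From Stdlib Require Import Reals List Lra Lia FunctionalExtensionality.
From Coquelicot Require Import Coquelicot.
From mathcomp Require Import ssreflect ssrfun ssrbool eqtype ssrnat seq fintype finfun bigop finset.
From Pilot Require Import Defs.

Set Implicit Arguments.
Unset Strict Implicit.
Unset Printing Implicit Defensive.

Local Open Scope R_scope.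

HB.instance Definition _ := Monoid.isComLaw.Build R 0 Rplus
  (fun x y z => esym (Rplus_assoc x y z)) Rplus_comm Rplus_0_l.
HB.instance Definition _ := Monoid.isMulLaw.Build R 0 Rmult Rmult_0_l Rmult_0_r.
HB.instance Definition _ := Monoid.isAddLaw.Build R Rmult Rplus
  Rmult_plus_distr_r Rmult_plus_distr_l.

Lemma Rabs_mult_lt x y M d : Rabs y < M -> Rabs x < d / M -> Rabs (x * y) < d.
Proof.
move=> Hy Hx; have HM : 0 < M by move: (Rabs_pos y); lra.
rewrite Rabs_mult; apply: (Rle_lt_trans _ (Rabs x * M)).
  by apply: Rmult_le_compat_l; [apply: Rabs_pos | lra].
have -> : d = d / M * M by field; lra.
by apply: Rmult_lt_compat_r.
Qed.

Lemma is_derive_shear (phi dphi : R -> R -> R) t0 b A :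
  is_derive (fun s => phi s t0) 0 A ->
  (forall s t, is_derive (phi s) t (dphi s t)) ->
  (forall eps, 0 < eps -> exists del, 0 < del /\ forall s t, Rabs s < del ->
      Rabs (t - t0) < del -> Rabs (dphi s t - dphi 0 t0) < eps) ->
  is_derive (fun s => phi s (t0 + s * b)) 0 (A + b * dphi 0 t0).
Proof.
move=> /is_derive_Reals HA Hdt Hcont; apply/is_derive_Reals => eps Heps.
have Hb1 : Rabs b < Rabs b + 1 by lra.
have [[d1 Hd1] Hquot] := HA (eps / 2) ltac:(lra).
have [|d2 [Hd2 Hclose]] := Hcont (eps / 2 / (Rabs b + 1)).
  by apply: Rdiv_lt_0_compat; move: (Rabs_pos b); lra.
have Hd3 : 0 < d2 / (Rabs b + 1) by apply: Rdiv_lt_0_compat; move: (Rabs_pos b); lra.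
set d := Rmin d1 (Rmin d2 (d2 / (Rabs b + 1))).
have Hd : 0 < d by apply: Rmin_pos => //; apply: Rmin_pos.
exists (mkposreal d Hd) => h Hh0 /= Hh; rewrite /d in Hh.
have Hhd1 : Rabs h < d1 by move: (Rmin_l d1 (Rmin d2 (d2 / (Rabs b + 1)))); lra.
have Hhd2 : Rabs h < d2.
  by move: (Rmin_r d1 (Rmin d2 (d2 / (Rabs b + 1)))) (Rmin_l d2 (d2 / (Rabs b + 1))); lra.
have Hhb : Rabs (h * b) < d2.
  apply: Rabs_mult_lt Hb1 _.
  by move: (Rmin_r d1 (Rmin d2 (d2 / (Rabs b + 1)))) (Rmin_r d2 (d2 / (Rabs b + 1))); lra.
have [c [Hmvt Hc]] := @MVT_cor4 (phi h) (dphi h) t0 (Rabs (h * b))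
  (fun c _ => Hdt h c) (t0 + h * b) ltac:(by replace (t0 + h * b - t0) with (h * b) by ring; lra).
replace (t0 + h * b - t0) with (h * b) in Hmvt, Hc by ring.
have Hs := Hquot h Hh0 Hhd1; rewrite Rplus_0_l in Hs.
have Ht := Hclose h c Hhd2 ltac:(lra).
rewrite Rplus_0_l Rmult_0_l Rplus_0_r.
have -> : phi h (t0 + h * b) = phi h t0 + dphi h c * (h * b) by lra.
have -> : (phi h t0 + dphi h c * (h * b) - phi 0 t0) / h - (A + b * dphi 0 t0)
  = ((phi h t0 - phi 0 t0) / h - A) + (dphi h c - dphi 0 t0) * b by field.
apply: Rle_lt_trans (Rabs_triang _ _) _.
have := Rabs_mult_lt Hb1 Ht; lra.
Qed.

Lemma is_derive_const_fun (g : R -> R) : (forall x, is_derive g x 0) -> forall a b, g a = g b.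
Proof.
move=> Hg a b; have [||c [_ Hc]] := @MVT_gen g b a (fun _ => 0).
- by move=> x _; apply: Hg.
- move=> x _; apply/continuity_pt_filterlim/ex_derive_continuous; eexists; exact: Hg.
- lra.
Qed.

Section CPE.
Context (n : nat).
Local Notation m := n.+2.
Local Notation var := (@Defs.var n).
Local Notation Point := (@Defs.Point n).
Local Notation fn := (@Defs.fn n).
Local Notation hform := (@Defs.hform n).
Local Notation eform := (@Defs.eform n).
Local Notation hzero := (@Defs.hzero n).
Local Notation ezero := (@Defs.ezero n).

(** * Functions of finitely many jet variables *)

Lemma var_eqbP (v w : var) : reflect (v = w) (var_eqb v w).
Proof.
apply: (iffP idP).
- case: v => [|a|a i|i]; case: w => [|b|b j|j] //=;
    by [move/eqP-> | case/andP=> /eqP-> /eqP-> | move/eqP->].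
- by move=> <-; case: v => [|a|a i|i] /=; rewrite ?eqxx.
Qed.

Lemma var_dec (v w : var) : {v = w} + {v <> w}.
Proof. by case: (var_eqbP v w); [left | right]. Qed.

Lemma upd_eq (p : Point) v s : upd p v s v = s.
Proof. by rewrite /upd; case: var_eqbP. Qed.

Lemma upd_neq (p : Point) v w s : w <> v -> upd p v s w = p w.
Proof. by rewrite /upd; case: var_eqbP. Qed.

Lemma upd_id (p : Point) v : upd p v (p v) = p.
Proof. by apply: functional_extensionality => w; rewrite /upd; case: var_eqbP => [->|]. Qed.

Lemma upd_upd (p : Point) v a b : upd (upd p v a) v b = upd p v b.
Proof. by apply: functional_extensionality => w; rewrite /upd; case: var_eqbP. Qed.

Lemma upd_comm (p : Point) u v a b : u <> v -> upd (upd p u a) v b = upd (upd p v b) u a.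
Proof.
move=> Huv; apply: functional_extensionality => w; rewrite /upd.
by case: (var_eqbP w v) => Hv; case: (var_eqbP w u) => Hu //; subst; case: Huv.
Qed.

Lemma dep_on_incl (S S' : list var) (f : fn) : incl S S' -> dep_on S f -> dep_on S' f.
Proof. by move=> HS Hf p q Hpq; apply: Hf => v /HS; apply: Hpq. Qed.

Lemma dep_on_upd (S : list var) (f : fn) v (p : Point) s :
  dep_on S f -> ~ In v S -> f (upd p v s) = f p.
Proof. by move=> Hf Hv; apply: Hf => w Hw; rewrite upd_neq // => E; rewrite E in Hw. Qed.

Lemma pd_indep (S : list var) (f : fn) v p : dep_on S f -> ~ In v S -> pd v f p = 0.
Proof.
move=> Hf Hv; rewrite /pd (Derive_ext _ (fun _ => f p)) ?Derive_const // => s.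
exact: (dep_on_upd _ _ Hf Hv).
Qed.

Lemma exd_indep (S : list var) (f : fn) v : dep_on S f -> ~ In v S -> exd v f.
Proof.
move=> Hf Hv p; apply: (ex_derive_ext (fun _ => f p)); last exact: ex_derive_const.
by move=> s; rewrite (dep_on_upd _ _ Hf Hv).
Qed.

Lemma dep_on_pd (S : list var) (f : fn) v : dep_on S f -> dep_on S (pd v f).
Proof.
move=> Hf p q Hpq; case: (In_dec var_dec v S) => Hv; last by rewrite !(pd_indep _ Hf Hv).
rewrite /pd (Hpq v Hv); apply: Derive_ext => s; apply: Hf => w Hw.
by rewrite /upd; case: var_eqb => //; apply: Hpq.
Qed.

Lemma dep_on_iter_pd (S : list var) (f : fn) vs : dep_on S f -> dep_on S (iter_pd vs f).
Proof. by elim: vs => //= v vs IH Hf; apply/dep_on_pd/IH. Qed.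

Lemma cont_on_incl (S S' : list var) (g : fn) : incl S S' -> cont_on S g -> cont_on S' g.
Proof.
move=> HS Hg p eps Heps; have [del [Hdel Hclose]] := Hg p eps Heps.
by exists del; split=> // q Hq; apply: Hclose => v /HS; apply: Hq.
Qed.

(* Compare [g q] with [g] at the point that agrees with [q] on [T] and with [p] elsewhere. *)
Lemma cont_on_dep (S T : list var) (g : fn) : dep_on T g -> cont_on S g -> cont_on T g.
Proof.
move=> HT Hg p eps Heps; have [del [Hdel Hclose]] := Hg p eps Heps.
exists del; split=> // q Hq.
pose q' : Point := fun w => if In_dec var_dec w T then q w else p w.
have -> : g q = g q' by apply: HT => v Hv; rewrite /q'; case: In_dec.
apply: Hclose => v _; rewrite /q'; case: In_dec => Hv; first exact: Hq.
by rewrite Rminus_eq_0 Rabs_R0.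
Qed.

Lemma cont_on_const (S : list var) c : cont_on S (fun _ => c).
Proof. by move=> p eps Heps; exists 1; split=> [|q _]; rewrite ?Rminus_eq_0 ?Rabs_R0; lra. Qed.

Lemma cont_on_proj (S : list var) v : In v S -> cont_on S (fun p => p v).
Proof. by move=> Hv p eps Heps; exists eps; split=> // q Hq; apply: Hq. Qed.

Lemma cont_on_comp2 (S : list var) (h : R -> R -> R) (f g : fn) :
  (forall x y, continuity_2d_pt h x y) -> cont_on S f -> cont_on S g ->
  cont_on S (fun p => h (f p) (g p)).
Proof.
move=> Hh Hf Hg p eps Heps.
have [[e He] Hclose] := Hh (f p) (g p) (mkposreal eps Heps).
have [d1 [Hd1 Hf1]] := Hf p e He; have [d2 [Hd2 Hg2]] := Hg p e He.
exists (Rmin d1 d2); split; first exact: Rmin_pos.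
move=> q Hq; apply: Hclose.
- by apply: Hf1 => v /Hq; move: (Rmin_l d1 d2); lra.
- by apply: Hg2 => v /Hq; move: (Rmin_r d1 d2); lra.
Qed.

Lemma cont_on_plus (S : list var) (f g : fn) :
  cont_on S f -> cont_on S g -> cont_on S (fun p => f p + g p).
Proof.
apply: (cont_on_comp2 (h := Rplus)) => x y.
exact: continuity_2d_pt_plus (continuity_2d_pt_id1 x y) (continuity_2d_pt_id2 x y).
Qed.

Lemma cont_on_mult (S : list var) (f g : fn) :
  cont_on S f -> cont_on S g -> cont_on S (fun p => f p * g p).
Proof.
apply: (cont_on_comp2 (h := Rmult)) => x y.
exact: continuity_2d_pt_mult (continuity_2d_pt_id1 x y) (continuity_2d_pt_id2 x y).
Qed.


(** * The chain rule along straight lines *)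

Definition lsum (S : list var) (F : var -> R) : R := fold_right (fun v acc => F v + acc) 0 S.

Lemma lsum_ext (S : list var) (F G : var -> R) :
  (forall v, In v S -> F v = G v) -> lsum S F = lsum S G.
Proof.
elim: S => //= a S IH H; rewrite H; last by left.
by rewrite IH // => v Hv; apply: H; right.
Qed.

Lemma lsum_abs_ge (S : list var) (d : var -> R) u :
  In u S -> Rabs (d u) <= lsum S (fun v => Rabs (d v)).
Proof.
have Hpos (T : list var) : 0 <= lsum T (fun v => Rabs (d v)).
  by elim: T => /= [|b T IH]; [lra | move: (Rabs_pos (d b)); lra].
by elim: S => //= a S IH [<-|/IH]; move: (Hpos S) (Rabs_pos (d a)); lra.
Qed.

Definition C1 (S : list var) (f : fn) : Prop :=
  dep_on S f /\ forall u, In u S -> exd u f /\ cont_on S (pd u f).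

Definition line (p d : Point) (s : R) : Point := fun w => p w + s * d w.

Lemma line0 (p d : Point) : line p d 0 = p.
Proof. by apply: functional_extensionality => w; rewrite /line; ring. Qed.

Lemma is_derive_upd (f : fn) v (q : Point) t :
  exd v f -> is_derive (fun t => f (upd q v t)) t (pd v f (upd q v t)).
Proof.
move=> Hf; rewrite /pd upd_eq (Derive_ext _ (fun s => f (upd q v s))) => [|s]; last first.
  by rewrite upd_upd.
apply: Derive_correct; apply: (ex_derive_ext (fun s => f (upd (upd q v t) v s))).
  by move=> s; rewrite upd_upd.
by have := Hf (upd q v t); rewrite upd_eq.
Qed.

Lemma pd_upd_frozen (f : fn) u v t (q : Point) : u <> v ->
  pd u (fun q => f (upd q v t)) q = pd u f (upd q v t).
Proof. by move=> Huv; rewrite /pd upd_neq //; apply: Derive_ext => s; rewrite upd_comm. Qed.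

Lemma C1_frozen (S : list var) (f : fn) v c :
  ~ In v S -> C1 (v :: S) f -> C1 S (fun q => f (upd q v c)).
Proof.
move=> HvS [Hdep Hpd]; have Hne u : In u S -> u <> v by move=> Hu E; rewrite E in Hu.
split=> [q q' Hq|u Hu].
  apply: Hdep => w /= [<-|Hw]; first by rewrite !upd_eq.
  by rewrite !upd_neq; [apply: Hq | apply: Hne..].
have [Hex Hc] := Hpd u (or_intror Hu); split.
- move=> q; have := Hex (upd q v c); rewrite upd_neq; last exact: Hne.
  move=> Hder.
  by apply: (ex_derive_ext _ _ _ _ Hder) => s; rewrite (upd_comm _ _ _ (Hne u Hu)).
- move=> q0 eps Heps; have [del [Hdel Hclose]] := Hc (upd q0 v c) eps Heps.
  exists del; split=> // q Hq; rewrite !pd_upd_frozen; try exact: Hne.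
  apply: Hclose => w /= [<-|Hw]; first by rewrite !upd_eq Rminus_eq_0 Rabs_R0.
  by rewrite !upd_neq; [apply: Hq | apply: Hne..].
Qed.

Lemma cont_pd_along_line (S : list var) (f : fn) v (p d : Point) :
  cont_on (v :: S) (pd v f) ->
  forall eps, 0 < eps -> exists del, 0 < del /\ forall s t, Rabs s < del ->
    Rabs (t - p v) < del ->
    Rabs (pd v f (upd (line p d s) v t) - pd v f (upd (line p d 0) v (p v))) < eps.
Proof.
move=> Hc eps Heps; have [del [Hdel Hclose]] := Hc p eps Heps.
set M := lsum (v :: S) (fun u => Rabs (d u)) + 1.
have HdM u : In u (v :: S) -> Rabs (d u) < M by move=> /(lsum_abs_ge d); rewrite /M; lra.
have HM : 0 < M by move: (HdM v (or_introl erefl)) (Rabs_pos (d v)); lra.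
exists (Rmin del (del / M)); split; first by apply: Rmin_pos => //; apply: Rdiv_lt_0_compat.
move=> s t Hs Ht; rewrite line0 upd_id; apply: Hclose => w Hw.
case: (var_dec w v) => [->|Hwv]; first by rewrite upd_eq; move: (Rmin_l del (del / M)); lra.
rewrite upd_neq // /line; replace (p w + s * d w - p w) with (s * d w) by ring.
by apply: Rabs_mult_lt (HdM w Hw) _; move: (Rmin_r del (del / M)); lra.
Qed.

Lemma is_derive_line (S : list var) : NoDup S -> forall (f : fn), C1 S f -> forall (p d : Point),
  is_derive (fun s => f (line p d s)) 0 (lsum S (fun v => d v * pd v f p)).
Proof.
elim: S => [|v S IH] HN f Cf p d.
  apply: (is_derive_ext (fun _ => f p)); last exact/is_derive_Reals/derivable_pt_lim_const.
  by move=> s; apply: Cf.1 => w [].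
move/NoDup_cons_iff: HN => [HvS HN]; have [Hex Hc] := Cf.2 v (or_introl erefl).
have Hne u : In u S -> u <> v by move=> Hu E; rewrite E in Hu.
(* freeze the coordinate [v] at [p v], move the others along the line, then move [v] *)
have Hrest := IH HN _ (C1_frozen (p v) HvS Cf) p d.
rewrite (lsum_ext (G := fun u => d u * pd u f p)) in Hrest; last first.
  by move=> u Hu; rewrite pd_upd_frozen ?upd_id //; apply: Hne.
have Hshear := is_derive_shear (d v) Hrest (fun s t => is_derive_upd (line p d s) t Hex)
  (cont_pd_along_line p d Hc).
rewrite line0 upd_id in Hshear; rewrite /= Rplus_comm.
apply: (is_derive_ext _ _ _ _ _ Hshear) => s; congr f.
by rewrite -{2}(upd_id (line p d s) v).
Qed.


(** * Smooth functions *)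

Definition smooth_in (S : list var) (f : fn) : Prop := dep_on S f /\ smooth_on S f.

Lemma iter_pd_rcons vs w (f : fn) : iter_pd (vs ++ w :: nil) f = iter_pd vs (pd w f).
Proof. by rewrite /iter_pd fold_right_app. Qed.

Lemma smooth_in_C1 (S : list var) (f : fn) : smooth_in S f -> C1 S f.
Proof. by case=> Hd [He Hc]; split=> // u Hu; split; [apply: (He nil) | apply: (Hc (u :: nil))]. Qed.

Lemma smooth_in_incl (S S' : list var) (f : fn) : incl S S' -> smooth_in S f -> smooth_in S' f.
Proof.
move=> HS [Hd [He Hc]]; split; first exact: dep_on_incl Hd.
by split=> // vs; apply: cont_on_incl (Hc vs).
Qed.

Lemma smooth_in_restrict (S T : list var) (f : fn) : dep_on T f -> smooth_in S f -> smooth_in T f.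
Proof.
move=> HT [_ [He Hc]]; split=> //; split=> // vs.
exact: cont_on_dep (dep_on_iter_pd vs HT) (Hc vs).
Qed.

Lemma smooth_in_pd (S : list var) (f : fn) v : smooth_in S f -> smooth_in S (pd v f).
Proof.
move=> [Hd [He Hc]]; split; first exact: dep_on_pd.
by split=> vs; rewrite -iter_pd_rcons; [apply: He | apply: Hc].
Qed.

Lemma smooth_in_of_pd (S : list var) (f : fn) : dep_on S f -> (forall w, exd w f) ->
  cont_on S f -> (forall w, smooth_in S (pd w f)) -> smooth_in S f.
Proof.
move=> Hd He Hc Hpd; split=> //.
suff Hsnoc (vs : list var) : vs = nil \/ exists vs' w, vs = vs' ++ w :: nil.
  split=> vs; case: (Hsnoc vs) => [->|[vs' [w ->]]] //; rewrite iter_pd_rcons.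
  - exact: (Hpd w).2.1.
  - exact: (Hpd w).2.2.
case: vs => [|a l]; [by left | right].
by have [vs' [w ->]] := @exists_last _ (a :: l) ltac:(done); exists vs', w.
Qed.

Lemma pd_const v c : pd v (fun _ : Point => c) = fun _ => 0.
Proof. by apply: functional_extensionality => p; rewrite /pd Derive_const. Qed.

Lemma smooth_in_const (S : list var) c : smooth_in S (fun _ => c).
Proof.
have Hiter vs : exists c', iter_pd vs (fun _ : Point => c) = fun _ => c'.
  by elim: vs => [|v vs [c' IH]] /=; [exists c | exists 0; rewrite /iter_pd /= in IH *; rewrite IH pd_const].
split=> //; split=> vs; have [c' ->] := Hiter vs; last exact: cont_on_const.
by move=> w p; apply: ex_derive_const.
Qed.

Lemma smooth_in_proj (S : list var) v : In v S -> smooth_in S (fun p => p v).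
Proof.
move=> Hv; apply: smooth_in_of_pd.
- by move=> p q Hpq; apply: Hpq.
- move=> w p; rewrite /upd; case: var_eqb; last exact: ex_derive_const.
  exact: ex_derive_id.
- exact: cont_on_proj.
- move=> w; apply: (@eq_ind _ (fun _ => if var_eqb v w then 1 else 0)); first exact: smooth_in_const.
  apply: functional_extensionality => p; rewrite /pd /upd.
  by case: var_eqb; [rewrite Derive_id | rewrite Derive_const].
Qed.

Lemma pd_plus v (f g : fn) : exd v f -> exd v g ->
  pd v (fun p => f p + g p) = fun p => pd v f p + pd v g p.
Proof. by move=> Hf Hg; apply: functional_extensionality => p; rewrite /pd Derive_plus. Qed.

Lemma pd_mult v (f g : fn) : exd v f -> exd v g ->
  pd v (fun p => f p * g p) = fun p => pd v f p * g p + f p * pd v g p.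
Proof.
by move=> Hf Hg; apply: functional_extensionality => p; rewrite /pd Derive_mult // !upd_id.
Qed.

Lemma iter_pd_plus vs (f g : fn) :
  (forall ws w, (length ws < length vs)%coq_nat -> exd w (iter_pd ws f) /\ exd w (iter_pd ws g)) ->
  iter_pd vs (fun p => f p + g p) = fun p => iter_pd vs f p + iter_pd vs g p.
Proof.
elim: vs => [|w vs IH] Hex //=; rewrite IH => [|ws w' Hws]; last by apply: Hex => /=; lia.
by have /= [|Hf Hg] := Hex vs w; [lia | rewrite pd_plus].
Qed.

Lemma smooth_in_plus (S : list var) (f g : fn) :
  smooth_in S f -> smooth_in S g -> smooth_in S (fun p => f p + g p).
Proof.
move=> [Hdf [Hef Hcf]] [Hdg [Heg Hcg]]; split; first by move=> p q H; rewrite (Hdf p q H) (Hdg p q H).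
have Hiter vs : iter_pd vs (fun p => f p + g p) = fun p => iter_pd vs f p + iter_pd vs g p.
  by apply: iter_pd_plus => ws w _; split; [apply: Hef | apply: Heg].
split=> vs; rewrite Hiter; last exact: cont_on_plus.
by move=> w p; apply: ex_derive_plus; [apply: Hef | apply: Heg].
Qed.

(* Leibniz rule, by induction on the order of differentiation: peeling off the
   innermost derivative turns [f * g] into a sum of two products of smooth functions. *)
Lemma smooth_on_mult_upto (S : list var) k : forall vs, (length vs <= k)%coq_nat ->
  forall f g, smooth_in S f -> smooth_in S g ->
  (forall w, exd w (iter_pd vs (fun p => f p * g p))) /\ cont_on S (iter_pd vs (fun p => f p * g p)).
Proof.
have Hbase f g : smooth_in S f -> smooth_in S g ->
    (forall w, exd w (fun p => f p * g p)) /\ cont_on S (fun p => f p * g p).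
  move=> [_ [Hef Hcf]] [_ [Heg Hcg]]; split; last exact: cont_on_mult (Hcf nil) (Hcg nil).
  by move=> w p; apply: ex_derive_mult; [apply: (Hef nil) | apply: (Heg nil)].
elim: k => [|k IH] vs Hl f g Hf Hg.
  by case: vs Hl => [_|//= a l]; [exact: Hbase | lia].
case: vs Hl => [|a l] Hl; first exact: Hbase.
have [vs' [w Evs]] := @exists_last _ (a :: l) ltac:(done); rewrite Evs iter_pd_rcons.
have Hl' : (length vs' <= k)%coq_nat.
  by move: (f_equal (@length _) Evs) Hl; rewrite app_length /=; lia.
have [_ [Hef _]] := Hf; have [_ [Heg _]] := Hg.
rewrite pd_mult ?iter_pd_plus; try by [apply: (Hef nil) | apply: (Heg nil)].
- have [Hex1 Hc1] := IH vs' Hl' _ _ (smooth_in_pd w Hf) Hg.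
  have [Hex2 Hc2] := IH vs' Hl' _ _ Hf (smooth_in_pd w Hg).
  by split; [move=> w' p; apply: ex_derive_plus; [apply: Hex1 | apply: Hex2] | apply: cont_on_plus].
- move=> ws w' Hws; have Hws' : (length ws <= k)%coq_nat by lia.
  by split; [apply: (IH ws Hws' _ _ (smooth_in_pd w Hf) Hg).1
            | apply: (IH ws Hws' _ _ Hf (smooth_in_pd w Hg)).1].
Qed.

Lemma smooth_in_mult (S : list var) (f g : fn) :
  smooth_in S f -> smooth_in S g -> smooth_in S (fun p => f p * g p).
Proof.
move=> Hf Hg; split; first by move=> p q H; rewrite (Hf.1 p q H) (Hg.1 p q H).
by split=> vs; case: (smooth_on_mult_upto (le_n (length vs)) Hf Hg).
Qed.


(* Smooth functions of finitely many variables, each satisfying [P]; for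
   [P v := allowed v = true] this is the algebra A(CPE). *)
Definition in_alg (P : var -> Prop) (f : fn) : Prop :=
  exists S : list var, List.Forall P S /\ smooth_in S f.

Section Closure.
Variable P : var -> Prop.

Lemma in_alg_ext (f g : fn) : (forall p, f p = g p) -> in_alg P f -> in_alg P g.
Proof. by move=> /functional_extensionality->. Qed.

Lemma in_alg_const c : in_alg P (fun _ => c).
Proof. by exists nil; split=> //; apply: smooth_in_const. Qed.

Lemma in_alg_proj v : P v -> in_alg P (fun p => p v).
Proof. by move=> Hv; exists (v :: nil); split; [constructor | apply: smooth_in_proj; left]. Qed.

Lemma in_alg_pd (f : fn) v : in_alg P f -> in_alg P (pd v f).
Proof. by case=> S [HS Hf]; exists S; split=> //; apply: smooth_in_pd. Qed.

Lemma in_alg_comp2 (h : fn -> fn -> fn) (f g : fn) :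
  (forall S, smooth_in S f -> smooth_in S g -> smooth_in S (h f g)) ->
  in_alg P f -> in_alg P g -> in_alg P (h f g).
Proof.
move=> Hh [S1 [H1 F1]] [S2 [H2 F2]]; exists (S1 ++ S2); split; first exact/List.Forall_app.
by apply: Hh; apply: smooth_in_incl; try eassumption; [apply: incl_appl | apply: incl_appr].
Qed.

Lemma in_alg_plus (f g : fn) : in_alg P f -> in_alg P g -> in_alg P (fun p => f p + g p).
Proof. by apply: (in_alg_comp2 (h := fun f g p => f p + g p)) => S; apply: smooth_in_plus. Qed.

Lemma in_alg_mult (f g : fn) : in_alg P f -> in_alg P g -> in_alg P (fun p => f p * g p).
Proof. by apply: (in_alg_comp2 (h := fun f g p => f p * g p)) => S; apply: smooth_in_mult. Qed.

Lemma in_alg_scal c (f : fn) : in_alg P f -> in_alg P (fun p => c * f p).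
Proof. exact/in_alg_mult/in_alg_const. Qed.

Lemma in_alg_opp (f : fn) : in_alg P f -> in_alg P (fun p => - f p).
Proof. by move=> /(in_alg_scal (-1)); apply: in_alg_ext => p; ring. Qed.

Lemma in_alg_lsum (S : list var) (F : var -> fn) :
  (forall v, In v S -> in_alg P (F v)) -> in_alg P (fun p => lsum S (fun v => F v p)).
Proof.
elim: S => [|v S IH] HF /=; first exact: in_alg_const.
by apply: in_alg_plus; [apply: HF; left | apply: IH => u Hu; apply: HF; right].
Qed.

Lemma in_alg_big (I : Type) (r : seq I) (Q : pred I) (F : I -> fn) :
  (forall i, Q i -> in_alg P (F i)) -> in_alg P (fun p => \big[Rplus/0]_(i <- r | Q i) F i p).
Proof.
move=> HF; elim: r => [|a r IH].
  by apply: (in_alg_ext _ (in_alg_const 0)) => p; rewrite big_nil.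
case Qa: (Q a); last by apply: (in_alg_ext _ IH) => p; rewrite big_cons Qa.
by apply: (in_alg_ext _ (in_alg_plus (HF a Qa) IH)) => p; rewrite big_cons Qa.
Qed.

Lemma in_alg_NoDup (f : fn) : in_alg P f ->
  exists S, List.Forall P S /\ NoDup S /\ smooth_in S f.
Proof.
case=> S [HS Hf]; exists (nodup var_dec S); split; last split.
- by apply/List.Forall_forall => v /nodup_In; move/List.Forall_forall: HS; apply.
- exact: NoDup_nodup.
- by apply: smooth_in_incl Hf => v /nodup_In.
Qed.

End Closure.

Lemma Dder_lsum (S : list var) (w : Point -> Point) (f : fn) p : NoDup S -> smooth_in S f ->
  Dder w f p = lsum S (fun v => w p v * pd v f p).
Proof.
move=> HN Hf; rewrite /Dder; apply: is_derive_unique.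
exact: (is_derive_line HN (smooth_in_C1 Hf) p (w p)).
Qed.

Lemma ex_Dder P (w : Point -> Point) (f : fn) p : in_alg P f ->
  ex_derive (fun s => f (fun v => p v + s * w p v)) 0.
Proof.
move=> /in_alg_NoDup [S [_ [HN Hf]]]; eexists.
exact: (is_derive_line HN (smooth_in_C1 Hf) p (w p)).
Qed.

Lemma in_alg_Dder P (w : Point -> Point) (f : fn) : in_alg P f ->
  (forall v, P v -> in_alg P (fun p => w p v)) -> in_alg P (Dder w f).
Proof.
move=> Hf Hw; have [S [HS [HN HSf]]] := in_alg_NoDup Hf.
apply: (in_alg_ext (f := fun p => lsum S (fun v => w p v * pd v f p))).
  by move=> p; rewrite (Dder_lsum _ _ HN HSf).
apply: in_alg_lsum => v Hv; apply: in_alg_mult; first by apply: Hw; move/List.Forall_forall: HS; apply.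
by exists S; split=> //; apply: smooth_in_pd.
Qed.

Lemma Dder_plus P (w : Point -> Point) (f g : fn) p : in_alg P f -> in_alg P g ->
  Dder w (fun q => f q + g q) p = Dder w f p + Dder w g p.
Proof. by move=> Hf Hg; rewrite /Dder Derive_plus //; [exact: ex_Dder Hf | exact: ex_Dder Hg]. Qed.

Lemma Dder_scal (w : Point -> Point) c (f : fn) p : Dder w (fun q => c * f q) p = c * Dder w f p.
Proof. by rewrite /Dder Derive_scal. Qed.

Lemma Dder_const (w : Point -> Point) c (p : Point) : Dder w (fun _ => c) p = 0.
Proof. by rewrite /Dder Derive_const. Qed.

Lemma Dder_zero (w : Point -> Point) (f : fn) p : (forall q, f q = 0) -> Dder w f p = 0.
Proof. by move=> /functional_extensionality->; apply: Dder_const. Qed.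

Lemma Dder_big P (w : Point -> Point) (I : Type) (r : seq I) (Q : pred I) (F : I -> fn) p :
  (forall i, Q i -> in_alg P (F i)) ->
  Dder w (fun q => \big[Rplus/0]_(i <- r | Q i) F i q) p = \big[Rplus/0]_(i <- r | Q i) Dder w (F i) p.
Proof.
move=> HF; elim: r => [|a r IH].
  by rewrite big_nil; apply: Dder_zero => q; rewrite big_nil.
have Hbig q : \big[Rplus/0]_(i <- a :: r | Q i) F i q
    = (if Q a then F a q else 0) + \big[Rplus/0]_(i <- r | Q i) F i q.
  by rewrite big_cons; case: (Q a); rewrite ?Rplus_0_l.
rewrite (functional_extensionality _ _ Hbig) big_cons (Dder_plus (P := P)); last exact: in_alg_big.
  by rewrite IH; case: (Q a); rewrite ?Dder_const ?Rplus_0_l.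
by case Qa: (Q a); [apply: HF | apply: in_alg_const].
Qed.


(** * Derivations *)

Lemma pd_upd_upd_l (g : fn) u v (p : Point) a b : u <> v ->
  pd u g (upd (upd p u a) v b) = Derive (fun s => g (upd (upd p u s) v b)) a.
Proof.
move=> Huv; rewrite /pd upd_neq // upd_eq; apply: Derive_ext => s.
by rewrite (upd_comm _ _ _ (nesym Huv)) upd_upd.
Qed.

Lemma pd_upd_upd_r (g : fn) u v (p : Point) a b :
  pd v g (upd (upd p u a) v b) = Derive (fun s => g (upd (upd p u a) v s)) b.
Proof. by rewrite /pd upd_eq; apply: Derive_ext => s; rewrite upd_upd. Qed.

Lemma continuity_2d_upd (S : list var) (h : fn) u v (p : Point) x y : cont_on S h ->
  continuity_2d_pt (fun a b => h (upd (upd p u a) v b)) x y.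
Proof.
move=> Hh eps; have [del [Hdel Hclose]] := Hh (upd (upd p u x) v y) eps (cond_pos eps).
exists (mkposreal _ Hdel) => a b /= Ha Hb; apply: Hclose => w _.
case: (var_dec w v) => [->|Hwv]; first by rewrite !upd_eq.
rewrite !(upd_neq _ _ Hwv); case: (var_dec w u) => [->|Hwu]; first by rewrite !upd_eq.
by rewrite !upd_neq // Rminus_eq_0 Rabs_R0.
Qed.

Lemma pd_comm (S : list var) (f : fn) u v (p : Point) :
  smooth_in S f -> pd u (pd v f) p = pd v (pd u f) p.
Proof.
move=> [_ [He Hc]]; case: (var_dec u v) => [->//|Huv].
pose G a b := f (upd (upd p u a) v b).
have E1 a b : Derive (fun z => Derive (G z) b) a = pd u (pd v f) (upd (upd p u a) v b).
  by rewrite pd_upd_upd_l //; apply: Derive_ext => z; rewrite pd_upd_upd_r.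
have E2 a b : Derive (fun z => Derive (G^~ z) a) b = pd v (pd u f) (upd (upd p u a) v b).
  by rewrite pd_upd_upd_r; apply: Derive_ext => z; rewrite pd_upd_upd_l.
have := @Schwarz G (p u) (p v); rewrite E1 E2 !upd_id; apply.
- exists (mkposreal 1 Rlt_0_1) => a b _ _; split; [|split; [|split]].
  + have := He nil u (upd (upd p u a) v b); rewrite upd_neq // upd_eq => Hex.
    by apply: (ex_derive_ext _ _ _ _ Hex) => s; rewrite /G (upd_comm _ _ _ (nesym Huv)) upd_upd.
  + have := He nil v (upd (upd p u a) v b); rewrite upd_eq => Hex.
    by apply: (ex_derive_ext _ _ _ _ Hex) => s; rewrite /G upd_upd.
  + have := He (v :: nil) u (upd (upd p u a) v b); rewrite upd_neq // upd_eq => Hex.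
    apply: (ex_derive_ext _ _ _ _ Hex) => s /=.
    by rewrite (upd_comm _ _ _ (nesym Huv)) upd_upd pd_upd_upd_r.
  + have := He (u :: nil) v (upd (upd p u a) v b); rewrite upd_eq => Hex.
    by apply: (ex_derive_ext _ _ _ _ Hex) => s /=; rewrite upd_upd pd_upd_upd_l.
- apply: (continuity_2d_pt_ext _ _ _ _ (fun a b => esym (E1 a b))).
  exact: continuity_2d_upd (Hc (u :: v :: nil)).
- apply: (continuity_2d_pt_ext _ _ _ _ (fun a b => esym (E2 a b))).
  exact: continuity_2d_upd (Hc (v :: u :: nil)).
Qed.

Lemma Derive_lsum (S : list var) (c : var -> R) (g : var -> R -> R) x :
  (forall v, In v S -> ex_derive (g v) x) ->
  Derive (fun s => lsum S (fun v => c v * g v s)) x = lsum S (fun v => c v * Derive (g v) x).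
Proof.
suff Hlsum : (forall v, In v S -> ex_derive (g v) x) ->
    ex_derive (fun s => lsum S (fun v => c v * g v s)) x /\
    Derive (fun s => lsum S (fun v => c v * g v s)) x = lsum S (fun v => c v * Derive (g v) x).
  by move=> /Hlsum[].
elim: S => [|a S IH] Hg /=; first by split; [apply: ex_derive_const | apply: Derive_const].
have [IH1 IH2] := IH (fun v Hv => Hg v (or_intror Hv)).
have Ha : ex_derive (fun s => c a * g a s) x by apply/ex_derive_scal/Hg; left.
by split; [apply: ex_derive_plus | rewrite Derive_plus // Derive_scal IH2].
Qed.

Lemma pd_Dder P (W : Point -> Point) (f : fn) v p : in_alg P f ->
  (forall u, P u -> forall (q : Point) s, W (upd q v s) u = W q u) ->
  pd v (Dder W f) p = Dder W (pd v f) p.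
Proof.
move=> Hf HW; have [S [HS [HN Hsm]]] := in_alg_NoDup Hf.
rewrite (Dder_lsum _ _ HN (smooth_in_pd v Hsm)).
rewrite /pd (Derive_ext _ (fun s => lsum S (fun u => W p u * pd u f (upd p v s)))).
  rewrite Derive_lsum => [|u Hu]; last by have := Hsm.2.1 (u :: nil) v p.
  by apply: lsum_ext => u Hu; congr (_ * _); apply: (pd_comm v u p Hsm).
move=> s; rewrite (Dder_lsum _ _ HN Hsm); apply: lsum_ext => u Hu; rewrite HW //.
by move/List.Forall_forall: HS; apply.
Qed.


(** * Total derivatives and the evolution derivation *)

Lemma addu_ord0 (i : mi n) (a : 'I_m) : a != ord0 -> addu i a ord0 = i ord0.
Proof. by move=> Ha; rewrite /addu ffunE eq_sym (negbTE Ha) addn0. Qed.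

(* [P] will be either all variables of A(CPE) or those other than [t]; the
   second instance shows that the coefficients of [D_1] do not depend on [t]. *)
Section TotalDerivatives.
Variable P : var -> Prop.
Hypothesis P_allowed : forall v, P v -> allowed v = true.
Hypothesis allowed_P : forall v, allowed v = true -> v <> Vt n -> P v.

Lemma in_alg_var v : allowed v = true -> v <> Vt n -> in_alg P (fun p => p v).
Proof. by move=> Hv Ht; apply/in_alg_proj/allowed_P. Qed.

Lemma in_alg_sumN (F : 'I_m -> fn) : (forall a, a != ord0 -> in_alg P (F a)) ->
  in_alg P (fun p => sumN (fun a => F a p)).
Proof. exact: in_alg_big. Qed.

Lemma in_alg_sumM (F : 'I_m -> fn) : (forall a, in_alg P (F a)) ->
  in_alg P (fun p => sumM (fun a => F a p)).
Proof. by move=> HF; apply: in_alg_big => a _. Qed.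

Lemma in_alg_U (l mu : 'I_m) : in_alg P (U l mu).
Proof.
rewrite /U; case Hlmu: ((l == ord0) && (mu == ord0)).
  by apply/in_alg_opp/in_alg_sumN => a Ha; apply: in_alg_var => //=; rewrite Ha.
apply: in_alg_var => //=; case: (eqVneq l ord0) Hlmu => //= _ Hmu.
by rewrite /e1 addu_ord0 ?Hmu // ffunE.
Qed.

Lemma in_alg_Phi : in_alg P (@Phi n).
Proof.
apply: in_alg_plus.
  by apply: in_alg_sumN => a Ha; apply: in_alg_var => //=; rewrite /e2 !addu_ord0 // ffunE.
by apply: in_alg_sumM => l; apply: in_alg_sumM => mu; apply: in_alg_mult; apply: in_alg_U.
Qed.

Lemma in_alg_wN (a : 'I_m) v : a != ord0 -> P v -> in_alg P (fun p => wN a p v).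
Proof.
move=> Ha Hv; have := P_allowed Hv; case: v Hv => [|nu|mu i|i] Hv /= Hal.
- exact: in_alg_const.
- by case: (nu == a); apply: in_alg_const.
- by apply: in_alg_var => //=; rewrite addu_ord0.
- by apply: in_alg_var => //=; rewrite addu_ord0.
Qed.

Lemma in_alg_Dalpha (a : 'I_m) (f : fn) : a != ord0 -> in_alg P f -> in_alg P (Dalpha a f).
Proof. by move=> Ha Hf; apply: (in_alg_Dder (w := wN a) Hf) => v; apply: in_alg_wN. Qed.

Lemma in_alg_DN (i : mi n) (f : fn) : in_alg P f -> in_alg P (DN i f).
Proof.
rewrite /DN; elim: (enum 'I_m) => //= a l IH /IH Hl.
by case: eqP => // /eqP Ha; elim: (i a) => //= k IHk; apply: in_alg_Dalpha.
Qed.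

Lemma in_alg_w1 v : P v -> in_alg P (fun p => w1 p v).
Proof.
move=> Hv; have := P_allowed Hv; case: v Hv => [|nu|mu i|i] Hv /= Hal.
- exact: in_alg_const.
- by case: (nu == ord0); apply: in_alg_const.
- case Hmu: (mu == ord0); last by apply: in_alg_var => //=; rewrite Hmu.
  by apply/in_alg_opp/in_alg_sumN => b Hb; apply: in_alg_var => //=; rewrite Hb.
- case Hi: (i ord0 == 0%N); last exact/in_alg_opp/in_alg_DN/in_alg_Phi.
  by apply: in_alg_var => //=; rewrite /addu ffunE eqxx; move/eqP: Hi => ->.
Qed.

Lemma in_alg_D1 (f : fn) : in_alg P f -> in_alg P (D1 f).
Proof. by move=> Hf; apply: (in_alg_Dder (w := @w1 n) Hf) => v; apply: in_alg_w1. Qed.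

Lemma in_alg_Dtot mu (f : fn) : in_alg P f -> in_alg P (Dtot mu f).
Proof.
rewrite /Dtot; case: eqP => Hmu Hf; first exact: in_alg_D1.
by apply: in_alg_Dalpha => //; apply/eqP.
Qed.

Lemma in_alg_Dmi (i : mi n) (f : fn) : in_alg P f -> in_alg P (Dmi i f).
Proof.
rewrite /Dmi; elim: (enum 'I_m) => //= a l IH /IH Hl.
by elim: (i a) => //= k IHk; apply: in_alg_Dtot.
Qed.

End TotalDerivatives.

Definition is_allowed (v : var) : Prop := allowed v = true.
Definition is_spatial (v : var) : Prop := allowed v = true /\ v <> Vt n.

Lemma Dtot_plus P mu (f g : fn) p : in_alg P f -> in_alg P g ->
  Dtot mu (fun q => f q + g q) p = Dtot mu f p + Dtot mu g p.
Proof. by rewrite /Dtot /D1 /Dalpha; case: (mu == ord0); apply: Dder_plus. Qed.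

Lemma Dtot_scal mu c (f : fn) p : Dtot mu (fun q => c * f q) p = c * Dtot mu f p.
Proof. by rewrite /Dtot /D1 /Dalpha; case: (mu == ord0); apply: Dder_scal. Qed.

Lemma Dtot_const mu c (p : Point) : Dtot mu (fun _ => c) p = 0.
Proof. by rewrite /Dtot /D1 /Dalpha; case: (mu == ord0); apply: Dder_const. Qed.

Lemma Dtot_zero mu (f : fn) p : (forall q, f q = 0) -> Dtot mu f p = 0.
Proof. by move=> /functional_extensionality->; apply: Dtot_const. Qed.

Lemma in_alg_spatial_upd_t (g : fn) (q : Point) s : in_alg is_spatial g -> g (upd q (Vt n) s) = g q.
Proof.
case=> S [HS [Hdep _]]; apply: (dep_on_upd _ _ Hdep) => Ht.
by move/List.Forall_forall: HS => /(_ _ Ht) [].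
Qed.

(* The total derivatives do not involve [t], so they commute with [d/dt]. *)
Lemma pd_t_Dtot mu (f : fn) p : in_alg is_allowed f ->
  pd (Vt n) (Dtot mu f) p = Dtot mu (pd (Vt n) f) p.
Proof.
move=> Hf; rewrite /Dtot /D1 /Dalpha; case: eqP => _.
- apply: (pd_Dder (W := @w1 n) p Hf) => v Hv q s.
  case: (var_dec v (Vt n)) => [->//|Hvt].
  by apply: (in_alg_spatial_upd_t (g := fun p => w1 p v)); apply: in_alg_w1 => // w [].
- by apply: (pd_Dder (W := wN mu) p Hf) => -[|nu|nu i|i].
Qed.


Lemma lsum_plus (S : list var) (F G : var -> R) :
  lsum S (fun v => F v + G v) = lsum S F + lsum S G.
Proof. by elim: S => /= [|a S ->]; ring. Qed.

Lemma lsum_eq0 (S : list var) (F : var -> R) : (forall v, In v S -> F v = 0) -> lsum S F = 0.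
Proof. by elim: S => //= a S IH HF; rewrite HF ?IH; [ring | move=> v Hv; apply: HF; right | left]. Qed.

Lemma lsum_supported (S : list var) (F : var -> R) u : NoDup S ->
  (forall v, v <> u -> F v = 0) -> (~ In u S -> F u = 0) -> lsum S F = F u.
Proof.
move=> HN HF Hu; case: (In_dec var_dec u S) => HuS; last first.
  by rewrite lsum_eq0 ?Hu // => v Hv; apply: HF => Evu; rewrite Evu in Hv.
elim: S HN HuS {Hu} => //= a S IH /NoDup_cons_iff [HaS HN] [Eau|HuS].
  by rewrite -Eau lsum_eq0 ?Rplus_0_r // => v Hv; apply: HF => Eva; rewrite Eva -Eau in Hv.
by rewrite HF ?IH ?Rplus_0_l // => Eau; rewrite Eau in HaS.
Qed.

Section Evolution.
Variables (Ec : 'I_m -> fn) (E0 : fn).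
Hypothesis HE : E_admissible Ec E0.

Lemma in_alg_wev v : in_alg is_allowed (fun p => wev Ec E0 p v).
Proof.
case: v => [|nu|mu i|i] /=; try exact: in_alg_const.
- by apply: in_alg_Dmi => //; exact: (HE.1 mu).
- by apply: in_alg_Dmi => //; exact: HE.2.1.
Qed.

Lemma in_alg_ev (f : fn) : in_alg is_allowed f -> in_alg is_allowed (ev Ec E0 f).
Proof. by move=> Hf; apply: (in_alg_Dder (w := wev Ec E0) Hf) => v _; apply: in_alg_wev. Qed.

Lemma in_alg_Dt (f : fn) : in_alg is_allowed f -> in_alg is_allowed (Dt Ec E0 f).
Proof.
move=> Hf; apply: (in_alg_Dder (w := wt Ec E0) Hf) => -[|nu|mu i|i] _;
  by [apply: in_alg_const | apply: (in_alg_wev (Vx nu)) | apply: (in_alg_wev (Vu mu i))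
     | apply: (in_alg_wev (Vp i))].
Qed.

Lemma Dt_pd_ev (f : fn) p : in_alg is_allowed f ->
  Dt Ec E0 f p = pd (Vt n) f p + ev Ec E0 f p.
Proof.
move=> Hf; have [S [_ [HN Hsm]]] := in_alg_NoDup Hf.
rewrite /Dt /ev !(Dder_lsum _ _ HN Hsm).
rewrite (lsum_ext (G := fun v => (if v is Vt then pd (Vt n) f p else 0)
                                 + wev Ec E0 p v * pd v f p)) => [|[|nu|mu i|i] _] /=; try ring.
rewrite lsum_plus (lsum_supported (u := Vt n) HN) => [//|[|nu|mu i|i] //=|].
exact: pd_indep Hsm.1.
Qed.

(* Uses the hypothesis that [ev_E] commutes with the total derivatives. *)
Lemma Dt_Dtot mu (f : fn) p : in_alg is_allowed f ->
  Dt Ec E0 (Dtot mu f) p = Dtot mu (Dt Ec E0 f) p.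
Proof.
move=> Hf; rewrite Dt_pd_ev; last exact: in_alg_Dtot.
rewrite pd_t_Dtot // (HE.2.2.2.2 mu f Hf p).
rewrite (functional_extensionality _ _ (fun q => Dt_pd_ev q Hf)).
by rewrite (Dtot_plus (P := is_allowed)) //; [apply: in_alg_pd | apply: in_alg_ev].
Qed.

End Evolution.

(** * Horizontal and evolution forms *)

Lemma hform_ext (a b : hform) : (forall S p, a S p = b S p) -> a = b.
Proof.
by move=> H; apply: functional_extensionality => S; apply: functional_extensionality; apply: H.
Qed.

Lemma isH_in_alg q (om : hform) S : isH q om -> in_alg is_allowed (om S).
Proof. by move=> /(_ S) []. Qed.

Lemma isH_out_of_range q (om : hform) : isH q om -> (q < 0 \/ Z.of_nat m < q)%Z ->
  forall S p, om S p = 0.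
Proof.
move=> Hom Hq S p; apply: (Hom S).1 => E.
have : (#|S| <= m)%N by rewrite -[X in (_ <= X)%N]card_ord max_card.
by move=> /leP; lia.
Qed.

Lemma isH_hzero q : isH q hzero.
Proof. by move=> S; split=> //; apply: in_alg_const. Qed.

Lemma isH_hadd q (a b : hform) : isH q a -> isH q b -> isH q (hadd a b).
Proof.
move=> Ha Hb S; split; last by apply: in_alg_plus; [apply: (Ha S).2 | apply: (Hb S).2].
by move=> E p; rewrite /hadd (Ha S).1 // (Hb S).1 // Rplus_0_r.
Qed.

Lemma isH_hscale q c (a : hform) : isH q a -> isH q (hscale c a).
Proof.
move=> Ha S; split; last exact/in_alg_scal/(Ha S).2.
by move=> E p; rewrite /hscale (Ha S).1 // Rmult_0_r.
Qed.

Lemma isH_dH q (om : hform) : isH q om -> isH (q + 1) (dH om).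
Proof.
move=> Hom T; split.
  move=> E p; apply: big1 => mu Hmu; rewrite Dtot_zero ?Rmult_0_r // => r; apply: (Hom _).1.
  by move: E; rewrite (cardsD1 mu T) Hmu add1n; lia.
by apply: in_alg_big => mu _; apply/in_alg_scal/in_alg_Dtot/(Hom _).2.
Qed.

Lemma dH_hadd (a b : hform) : (forall S, in_alg is_allowed (a S)) ->
  (forall S, in_alg is_allowed (b S)) -> dH (hadd a b) = hadd (dH a) (dH b).
Proof.
move=> Ha Hb; apply: hform_ext => T p; rewrite /dH /hadd -big_split; apply: eq_bigr => mu _.
by rewrite (Dtot_plus (P := is_allowed)) // Rmult_plus_distr_l.
Qed.

Lemma dH_hscale c (a : hform) : dH (hscale c a) = hscale c (dH a).
Proof.
apply: hform_ext => T p; rewrite /dH /hscale big_distrr; apply: eq_bigr => mu _ /=.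
by rewrite Dtot_scal; ring.
Qed.

Lemma dH_hzero : dH hzero = hzero.
Proof. by apply: hform_ext => T p; apply: big1 => mu _; rewrite Dtot_zero ?Rmult_0_r. Qed.

Lemma dH_set0 (om : hform) p : dH om set0 p = 0.
Proof. by apply: big1 => mu; rewrite in_set0. Qed.

Section Evolution.
Variables (Ec : 'I_m -> fn) (E0 : fn).
Hypothesis HE : E_admissible Ec E0.

Lemma Dt_zero (f : fn) p : (forall q, f q = 0) -> Dt Ec E0 f p = 0.
Proof. exact: Dder_zero. Qed.

Lemma isH_hDt q (om : hform) : isH q om -> isH q (hDt Ec E0 om).
Proof.
move=> Hom S; split; last exact/in_alg_Dt/(Hom S).2.
by move=> E p; apply: Dt_zero => r; apply: (Hom S).1.
Qed.

Lemma hDt_hzero : hDt Ec E0 hzero = hzero.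
Proof. by apply: hform_ext => T p; apply: Dt_zero. Qed.

Lemma hDt_dH (om : hform) : (forall S, in_alg is_allowed (om S)) ->
  hDt Ec E0 (dH om) = dH (hDt Ec E0 om).
Proof.
move=> Hom; apply: hform_ext => T p; rewrite /hDt /dH /Dt (Dder_big (P := is_allowed)).
  by apply: eq_bigr => mu _; rewrite Dder_scal; congr (_ * _); apply: (Dt_Dtot HE).
by move=> mu _; apply/in_alg_scal/in_alg_Dtot/Hom.
Qed.

End Evolution.

Definition p0 : Point := fun _ => 0.

Lemma dep_on_t_eval (f : fn) (p : Point) :
  dep_on (Vt n :: nil) f -> f p = f (upd p0 (Vt n) (p (Vt n))).
Proof. by move=> Hf; apply: Hf => v [<-|[]]; rewrite upd_eq. Qed.

Lemma smooth_in_t_comp (F dF : R -> R) : (forall x, is_derive F x (dF x)) ->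
  smooth_in (Vt n :: nil) (fun p => dF (p (Vt n))) ->
  smooth_in (Vt n :: nil) (fun p => F (p (Vt n))).
Proof.
move=> HF HdF; have Hdep : dep_on (Vt n :: nil) (fun p => F (p (Vt n))).
  by move=> p q Hpq; rewrite Hpq //; left.
have Hne v : v <> Vt n -> ~ In v (Vt n :: nil) by move=> Hv [E|[]]; apply: Hv.
apply: smooth_in_of_pd => // [w|p eps Heps|w].
- case: (var_dec w (Vt n)) => [-> p|/Hne Hw]; last exact: exd_indep Hdep Hw.
  by apply: (ex_derive_ext F) => [s|]; [rewrite upd_eq | eexists; apply: HF].
- have := ex_derive_continuous F (p (Vt n)) (ex_intro _ _ (HF _)).
  move/continuity_pt_filterlim => /(_ eps Heps) [del [Hdel Hclose]].
  exists del; split=> // q Hq.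
  case: (Req_dec (q (Vt n)) (p (Vt n))) => [->|Hqp]; first by rewrite Rminus_eq_0 Rabs_R0.
  by apply: Hclose; split; [split=> //; apply: nesym | apply: Hq; left].
- case: (var_dec w (Vt n)) => [->|/Hne Hw].
    congr smooth_in: HdF; apply: functional_extensionality => p.
    by rewrite /pd (Derive_ext _ F) ?(is_derive_unique _ _ _ (HF _)) // => s; rewrite upd_eq.
  apply: (@eq_ind _ (fun _ => 0)); first exact: smooth_in_const.
  by apply: functional_extensionality => p; rewrite (pd_indep _ Hdep Hw).
Qed.

Section Evolution.
Variables (Ec : 'I_m -> fn) (E0 : fn).

Lemma Dt_of_t (f : fn) p : smooth_in (Vt n :: nil) f -> Dt Ec E0 f p = pd (Vt n) f p.
Proof.
move=> Hf; rewrite /Dt (Dder_lsum _ _ _ Hf) /=; first ring.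
by constructor; [case | constructor].
Qed.

Lemma Dt_eq0_const (f : fn) : in_alg is_allowed f -> dep_on (Vt n :: nil) f ->
  (forall p, Dt Ec E0 f p = 0) -> forall p, f p = f p0.
Proof.
move=> [S [_ Hsm]] Hdep HDt p.
have Ht := smooth_in_restrict Hdep Hsm.
have Hder x : is_derive (fun t => f (upd p0 (Vt n) t)) x 0.
  by rewrite -(HDt (upd p0 (Vt n) x)) Dt_of_t //; apply: is_derive_upd; apply: (Ht.2.1 nil).
rewrite (dep_on_t_eval p Hdep) (is_derive_const_fun Hder (p (Vt n)) 0).
by rewrite -{2}(upd_id p0 (Vt n)).
Qed.

(* A function of [t] alone has a [D_t]-primitive: its integral in [t]. *)
Lemma Dt_primitive (c : fn) : in_alg is_allowed c -> dep_on (Vt n :: nil) c ->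
  exists G : fn, in_alg is_allowed G /\ dep_on (Vt n :: nil) G /\ forall p, Dt Ec E0 G p = c p.
Proof.
move=> [S [_ Hsm]] Hdep; have Ht := smooth_in_restrict Hdep Hsm.
pose gam t := c (upd p0 (Vt n) t).
have Hc_eval p : c p = gam (p (Vt n)) by apply: dep_on_t_eval.
have Hgam t : continuous gam t.
  apply/continuity_pt_filterlim => eps Heps.
  have [del [Hdel Hclose]] := Ht.2.2 nil (upd p0 (Vt n) t) eps Heps.
  by exists del; split=> // x [_ Hx]; apply: Hclose => v [<-|[]]; rewrite !upd_eq.
pose Gam x := RInt gam 0 x.
have HGam x : is_derive Gam x (gam x).
  apply: (is_derive_RInt gam Gam 0); last exact: Hgam.
  exists (mkposreal 1 Rlt_0_1) => y _; apply: RInt_correct.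
  by apply: ex_RInt_continuous => z _; apply: Hgam.
have HG : smooth_in (Vt n :: nil) (fun p => Gam (p (Vt n))).
  apply: smooth_in_t_comp HGam _.
  by congr smooth_in: Ht; apply: functional_extensionality => p; rewrite Hc_eval.
exists (fun p => Gam (p (Vt n))); split; last split; [|exact: HG.1|].
- by exists (Vt n :: nil); split=> //; constructor.
- move=> p; rewrite Dt_of_t // Hc_eval /pd.
  by rewrite (Derive_ext _ Gam) ?(is_derive_unique _ _ _ (HGam _)) // => s; rewrite upd_eq.
Qed.

End Evolution.

(** * Cohomology *)

Section Cohomology.
Variables (Ec : 'I_m -> fn) (E0 : fn).
Hypothesis HE : E_admissible Ec E0.
Hypothesis HH_vanish : forall q : Z, (1 <= q <= Z.of_nat m - 2)%Z ->
  forall om : hform, ZH q om -> BH q om.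
Hypothesis HH0 : forall om : hform, isH 0%Z om ->
  (ZH 0%Z om <-> dep_on (Vt n :: nil) (om set0)).

Local Notation hDt := (hDt Ec E0).
Local Notation dE := (dE Ec E0).

Lemma dE_eq0_fst (x : eform) : dE x = ezero -> hDt x.2 = dH x.1.
Proof.
move=> /(f_equal fst) /= Hx; apply: hform_ext => S p.
by have := f_equal (fun h => h S p) Hx; rewrite /Defs.hDt /Defs.hzero /=; lra.
Qed.

Lemma dE_eq0_snd (x : eform) : dE x = ezero -> dH x.2 = hzero.
Proof. exact: (f_equal snd). Qed.

Lemma defect_closed q (x : eform) (eta : hform) : ZE Ec E0 q x -> isH (q - 1) eta ->
  dH eta = x.2 -> ZH (q - 1) (hadd (hDt eta) (hscale (-1) x.1)).
Proof.
move=> [[Hx1 _] Hd] Heta Hdeta.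
have Heta' S := isH_in_alg S Heta.
split; first by apply: isH_hadd; [apply: isH_hDt | apply: isH_hscale].
rewrite dH_hadd => [|S|S]; last by apply: isH_in_alg (isH_hscale _ Hx1).
- rewrite dH_hscale -hDt_dH // Hdeta (dE_eq0_fst Hd).
  by apply: hform_ext => S p; rewrite /hadd /hscale /Defs.hzero; ring.
- exact/in_alg_Dt/Heta'.
Qed.

Lemma ZE_exact_of_defect q (x : eform) (eta zeta g : hform) : ZE Ec E0 q x ->
  isH (q - 1) eta -> dH eta = x.2 -> isH (q - 2) zeta -> isH (q - 1) g -> dH g = hzero ->
  hadd (hDt eta) (hscale (-1) x.1) = hadd (dH zeta) (hDt g) -> BE Ec E0 q x.
Proof.
move=> [[Hx1 _] _] Heta Hdeta Hzeta Hg Hdg Hdefect.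
exists (zeta, hadd eta (hscale (-1) g)); split.
  by split; [rewrite (_ : q - 1 - 1 = q - 2)%Z; [|lia] | apply/isH_hadd/isH_hscale].
case: x Hx1 Hdeta Hdefect => a b Hx1 /= Hdeta Hdefect; congr pair.
- apply: hform_ext => S p; rewrite /hadd /hscale /=.
  rewrite /Dt (Dder_plus (P := is_allowed)) ?Dder_scal;
    [|exact: isH_in_alg Heta|exact/in_alg_scal/(isH_in_alg S Hg)].
  by have := f_equal (fun h => h S p) Hdefect; rewrite /hadd /hscale /= /Defs.hDt /Dt; lra.
- rewrite dH_hadd => [|S|S]; [|exact: isH_in_alg Heta|exact: isH_in_alg (isH_hscale _ Hg)].
  by rewrite dH_hscale Hdg Hdeta; apply: hform_ext => S p /=; rewrite /hadd /hscale /hzero; ring.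
Qed.

(* Every closed form of degree [0 <= k <= m - 2] is [d_H zeta + D_t g] with [g] closed:
   in positive degree it is exact, in degree 0 it depends on [t] only and is
   integrated in [t]. *)
Lemma ZH_decompose q : (1 <= q <= Z.of_nat m - 1)%Z -> forall c : hform, ZH (q - 1) c ->
  exists zeta g : hform, [/\ isH (q - 2) zeta, isH (q - 1) g, dH g = hzero &
    c = hadd (dH zeta) (hDt g)].
Proof.
move=> Hq c Hc; case: (Z.eq_dec q 1) => [Eq1|Hq1]; last first.
  have [zeta [Hzeta Hdzeta]] := HH_vanish (q := q - 1) ltac:(lia) Hc.
  exists zeta, hzero; split; [by rewrite (_ : q - 2 = q - 1 - 1)%Z; [|lia] | exact: isH_hzero
    | exact: dH_hzero | ].
  by rewrite hDt_hzero Hdzeta; apply: hform_ext => S p; rewrite /hadd /hzero Rplus_0_r.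
subst q; have [Hc0 _] := Hc.
have [G [HG [HdG HDtG]]] := Dt_primitive Ec E0 (isH_in_alg set0 Hc0) ((HH0 Hc0).1 Hc).
pose g : hform := fun S => if S == set0 then G else fun _ => 0.
have Hg : isH 0 g.
  move=> S; rewrite /g; case: eqP => [->|_]; last by split=> //; apply: in_alg_const.
  by rewrite cards0.
have Hgclosed : ZH 0 g by apply/(HH0 Hg); rewrite /g eqxx.
exists hzero, g; split; [exact: isH_hzero | exact: Hg | exact: Hgclosed.2 |].
rewrite dH_hzero; apply: hform_ext => S p; rewrite /hadd /hzero /Defs.hDt /g Rplus_0_l.
case: eqP => [->|HS]; first by rewrite HDtG.
rewrite Dt_zero // (Hc0 S).1 // => E.
by apply: HS; apply/eqP; rewrite -cards_eq0; apply/eqP; lia.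
Qed.

Lemma ZE_exact_of_snd_exact q (x : eform) : (1 <= q <= Z.of_nat m - 1)%Z ->
  ZE Ec E0 q x -> BH q x.2 -> BE Ec E0 q x.
Proof.
move=> Hq Hx [eta [Heta Hdeta]].
have [zeta [g [Hzeta Hg Hdg Hdefect]]] := ZH_decompose Hq (defect_closed Hx Heta Hdeta).
exact: ZE_exact_of_defect Hx Heta Hdeta Hzeta Hg Hdg Hdefect.
Qed.

Lemma ZE_exact_out_of_range q (x : eform) : (q < 0 \/ Z.of_nat m + 1 < q)%Z ->
  ZE Ec E0 q x -> BE Ec E0 q x.
Proof.
move=> Hq [[Hx1 Hx2] _]; exists ezero; split; first by split; apply: isH_hzero.
case: x Hx1 Hx2 => a b /= Hx1 Hx2; rewrite /Defs.dE /=; congr pair; apply: hform_ext => S p.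
- by rewrite Dt_zero // dH_hzero /hzero (isH_out_of_range Hx1) //; [ring | lia].
- by rewrite dH_hzero /hzero (isH_out_of_range Hx2) //; lia.
Qed.

Lemma evolution_cohomology_vanishes q :
  ((q < 0)%Z \/ (1 <= q <= Z.of_nat m - 2)%Z \/ (Z.of_nat m + 1 < q)%Z) ->
  forall x, ZE Ec E0 q x -> BE Ec E0 q x.
Proof.
move=> [Hq|[Hq|Hq]] x Hx; try by apply: ZE_exact_out_of_range Hx; lia.
apply: (ZE_exact_of_snd_exact _ Hx); first lia.
by apply: (HH_vanish Hq); split; [exact: Hx.1.2 | exact: dE_eq0_snd Hx.2].
Qed.
Lemma hadd_opp (om : hform) : hadd om (hscale (-1) om) = hzero.
Proof. by apply: hform_ext => S p; rewrite /hadd /hscale /Defs.hzero; ring. Qed.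

Lemma BH_hzero q : BH q hzero.
Proof. by exists hzero; split; [apply: isH_hzero | apply: dH_hzero]. Qed.

Lemma BE_snd q (x : eform) : BE Ec E0 q x -> BH q x.2.
Proof. by move=> [y [[_ Hy2] <-]]; exists y.2. Qed.

(* In the two middle degrees the class of [dt /\ a + b] is read off [b]. *)
Lemma quot_iso_snd q (B : eform -> Prop) :
  (forall x, B x -> BH q x.2) -> (forall x, ZE Ec E0 q x -> BH q x.2 -> B x) ->
  quot_iso (@eadd n) (@escale n) (@hadd n) (@hscale n) (ZE Ec E0 q) B
    (fun om => ZH q om /\ BH q (hDt om)) (BH q).
Proof.
move=> HB_snd Hsnd_B; exists snd; split; [by [] | split; [by [] | split; [|split; [by [] |]]]].
  move=> x [[Hx1 Hx2] Hd]; split; first by split=> //; apply: dE_eq0_snd.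
  by exists x.1; split=> //; rewrite (dE_eq0_fst Hd).
split=> [om [[Hom Hdom] [eta [Heta Hdeta]]]|//].
exists (eta, om); split; last by rewrite hadd_opp; apply: BH_hzero.
split; first by split.
rewrite /Defs.dE /=; congr pair=> //; apply: hform_ext => S p.
by rewrite Hdeta /Defs.hDt /Defs.hzero; ring.
Qed.

Lemma evolution_H0_iso_R :
  quot_iso (@eadd n) (@escale n) Rplus Rmult
    (ZE Ec E0 0%Z) (BE Ec E0 0%Z) (fun _ : R => True) (fun r : R => r = 0%R).
Proof.
exists (fun x : eform => x.2 set0 p0); split; [by [] | split; [by [] | split; [by [] | split]]].
  by move=> x [y [_ <-]] /=; apply: dH_set0.
split=> [r _|[a b] [[Ha Hb] Hd] /= Hb0].
  pose om : hform := fun S _ => if S == set0 then r else 0.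
  have Hom : isH 0 om.
    move=> S; rewrite /om; split; last by case: (S == set0); apply: in_alg_const.
    by case: eqP => [->|//]; rewrite cards0.
  exists (hzero, om); split; last by rewrite /= /om eqxx; ring.
  split; first by split; [apply: isH_hzero |].
  rewrite /Defs.dE /= dH_hzero; congr pair; apply: hform_ext => S p.
    by rewrite /Dt /om Dder_const /Defs.hzero; ring.
  by rewrite /Defs.hzero /dH; apply: big1 => mu _; rewrite Dtot_const Rmult_0_r.
(* a closed 0-form is a function of [t] killed by [D_t], hence a constant *)
move: Ha Hb => /= Ha Hb; have Hbclosed : ZH 0 b by split=> //; apply: (dE_eq0_snd Hd).
have Hbconst := Dt_eq0_const (Ec := Ec) (E0 := E0) (isH_in_alg set0 Hb) ((HH0 Hb).1 Hbclosed).
exists ezero; split; first by split; apply: isH_hzero.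
rewrite /Defs.dE /Defs.ezero /= dH_hzero; congr pair; apply: hform_ext => S p.
  by rewrite Dt_zero // /Defs.hzero (isH_out_of_range Ha) //; [ring | lia].
case: (eqVneq S set0) => [->|HS].
  rewrite Hbconst ?Hb0 // => q; have := f_equal (fun h => h set0 q) (dE_eq0_fst Hd).
  by rewrite /= dH_set0.
rewrite /Defs.hzero (Hb S).1 // => E.
by apply/negP: HS; rewrite negbK -cards_eq0; apply/eqP; lia.
Qed.

Lemma evolution_H_m_minus_1_iso :
  quot_iso (@eadd n) (@escale n) (@hadd n) (@hscale n)
    (ZE Ec E0 (Z.of_nat m - 1)) (BE Ec E0 (Z.of_nat m - 1))
    (fun om => ZH (Z.of_nat m - 1) om /\ BH (Z.of_nat m - 1) (hDt om))
    (BH (Z.of_nat m - 1)).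
Proof.
apply: quot_iso_snd => [x|x]; first exact: BE_snd.
by apply: ZE_exact_of_snd_exact; lia.
Qed.

Lemma evolution_H_m_iso :
  quot_iso (@eadd n) (@escale n) (@hadd n) (@hscale n)
    (ZE Ec E0 (Z.of_nat m))
    (fun x => exists y c, BE Ec E0 (Z.of_nat m) y /\ ZH (Z.of_nat m - 1) c /\
                 x = eadd y (hscale ((-1) ^ n.+1)%R c, hzero))
    (fun om => ZH (Z.of_nat m) om /\ BH (Z.of_nat m) (hDt om)) (BH (Z.of_nat m)).
Proof.
apply: quot_iso_snd => [x [y [c [Hy [_ ->]]]]|[a b] Hx [eta [Heta Hdeta]]].
  have [eta [Heta Hdeta]] := BE_snd Hy; exists eta; split=> //.
  by rewrite Hdeta /eadd /=; apply: hform_ext => S p; rewrite /hadd /Defs.hzero; ring.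
(* [dt /\ a + b = d_E eta + s dt /\ (- s (D_t eta - a))] with [s = (-1)^(m-1)], [s^2 = 1] *)
set s := ((-1) ^ n.+1)%R.
have Hs2 : (s * s = 1)%R by rewrite -Rpow_mult_distr (_ : (-1 * -1 = 1)%R) ?pow1 //; ring.
have Hdefect := defect_closed Hx Heta Hdeta.
exists (dE (hzero, eta)), (hscale (- s) (hadd (hDt eta) (hscale (-1) a))); split.
  by exists (hzero, eta); split=> //; split=> //; apply: isH_hzero.
split; first by split; [apply: isH_hscale Hdefect.1 | rewrite dH_hscale Hdefect.2;
  apply: hform_ext => S p; rewrite /hscale /Defs.hzero; ring].
rewrite /eadd /Defs.dE /=; congr pair; apply: hform_ext => S p.
  rewrite /hadd /hscale /Defs.hDt dH_hzero /Defs.hzero /=.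
  by rewrite -Rmult_assoc -Ropp_mult_distr_r Hs2; ring.
by rewrite /hadd Hdeta /Defs.hzero /=; ring.
Qed.

Lemma evolution_H_top_iso :
  quot_iso (@eadd n) (@escale n) (@hadd n) (@hscale n)
    (ZE Ec E0 (Z.of_nat m + 1)) (BE Ec E0 (Z.of_nat m + 1))
    (ZH (Z.of_nat m))
    (fun om => exists eta zeta, isH (Z.of_nat m - 1) eta /\ ZH (Z.of_nat m) zeta /\
                 om = hadd (dH eta) (hDt zeta)).
Proof.
have E1 : (Z.of_nat m + 1 - 1 = Z.of_nat m)%Z by lia.
have E2 : (Z.of_nat m + 1 - 1 - 1 = Z.of_nat m - 1)%Z by lia.
have ZH_top (om : hform) : isH (Z.of_nat m) om -> ZH (Z.of_nat m) om.
  move=> Hom; split=> //; apply: hform_ext => T p.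
  by apply: (isH_out_of_range (isH_dH Hom)); lia.
exists fst; split; [by [] | split; [by [] | split; [|split; [|split]]]].
- by move=> x [[Hx1 _] _]; apply: ZH_top; rewrite -E1.
- move=> x [[y1 y2] [[Hy1 Hy2] <-]] /=; rewrite E2 in Hy1; rewrite E1 in Hy2.
  exists (hscale (-1) y1), y2; split; [exact: isH_hscale | split; first exact: ZH_top].
  by rewrite dH_hscale; apply: hform_ext => S p; rewrite /hadd /hscale /Defs.hDt; ring.
- move=> om Hom; exists (om, hzero); split.
    split; first by split; [rewrite E1; exact: Hom.1 | exact: isH_hzero].
    rewrite /Defs.dE /= dH_hzero; congr pair; apply: hform_ext => S p.
    by rewrite Dt_zero // (proj2 Hom) /Defs.hzero; ring.
  exists hzero, hzero; split; first exact: isH_hzero.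
  split; first by split; [exact: isH_hzero | exact: dH_hzero].
  by rewrite dH_hzero hDt_hzero hadd_opp; apply: hform_ext => S p; rewrite /hadd /Defs.hzero; ring.
- move=> [a b] [[_ Hb] _] [eta [zeta [Heta [[Hzeta Hdzeta] Ha]]]].
  exists (hscale (-1) eta, zeta); split; first by split; [rewrite E2; apply: isH_hscale | rewrite E1].
  rewrite /Defs.dE /=; congr pair; apply: hform_ext => S p.
    by rewrite [a]Ha dH_hscale /hadd /hscale /Defs.hDt; ring.
  by rewrite Hdzeta /Defs.hzero (isH_out_of_range (om := b) Hb) //; lia.
Qed.

End Cohomology.

End CPE.

Local Close Scope R_scope.

Theorem mainTheorem7 (n : nat) (Ec : 'I_n.+2 -> fn n) (E0 : fn n) :
  E_admissible Ec E0 ->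
  (forall q : Z, (1 <= q <= Z.of_nat n.+2 - 2)%Z ->
     forall om : hform n, ZH q om -> BH q om) ->
  (forall om : hform n, isH 0%Z om ->
     (ZH 0%Z om <-> dep_on (Vt n :: nil) (om set0))) ->
  let m := Z.of_nat n.+2 in
  (forall q : Z, ((q < 0)%Z \/ (1 <= q <= m - 2)%Z \/ (m + 1 < q)%Z) ->
     forall x, ZE Ec E0 q x -> BE Ec E0 q x) /\
  quot_iso (@eadd n) (@escale n) Rplus Rmult
    (ZE Ec E0 0%Z) (BE Ec E0 0%Z) (fun _ : R => True) (fun r : R => r = 0%R) /\
  quot_iso (@eadd n) (@escale n) (@hadd n) (@hscale n)
    (ZE Ec E0 (m - 1)) (BE Ec E0 (m - 1))
    (fun om => ZH (m - 1) om /\ BH (m - 1) (hDt Ec E0 om)) (BH (m - 1)) /\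
  quot_iso (@eadd n) (@escale n) (@hadd n) (@hscale n)
    (ZE Ec E0 (m + 1)) (BE Ec E0 (m + 1))
    (ZH m)
    (fun om => exists eta zeta, isH (m - 1) eta /\ ZH m zeta /\
                 om = hadd (dH eta) (hDt Ec E0 zeta)) /\
  quot_iso (@eadd n) (@escale n) (@hadd n) (@hscale n)
    (ZE Ec E0 m)
    (fun x => exists y c, BE Ec E0 m y /\ ZH (m - 1) c /\
                 x = eadd y (hscale ((-1) ^ n.+1)%R c, @hzero n))
    (fun om => ZH m om /\ BH m (hDt Ec E0 om)) (BH m).
Proof.
move=> HE HH_vanish HH0 m; split; first exact: evolution_cohomology_vanishes.
split; first exact: evolution_H0_iso_R.
split; first exact: evolution_H_m_minus_1_iso.
split; first exact: evolution_H_top_iso.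
exact: evolution_H_m_iso.
Qed.
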